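(* Let $(a,b,c)$ be a cyclic triple, assume (AW), that $(A^a,A^b)$ is a Leonard pair as in the context, and that $(A^b,A^c)$ is also a Leonard pair with eigenvalue orderings $\theta^b_0,\dots,\theta^b_{2s}$ and $\theta^c_0,\dots,\theta^c_{2s}$. Let $\{|\theta^b_M\rangle\}$ be the eigenbasis of $A^b$ attached to the pair $(A^a,A^b)$. Then for $0\le M\le 2s$, $$A^c|\theta^b_M\rangle=A^{(c,b)}_{M+1,M}\,\mathfrak g(M)\,|\theta^b_{M+1}\rangle+A^{(c,b)}_{M,M}|\theta^b_M\rangle+A^{(c,b)}_{M-1,M}\,\mathfrak g(M-1)^{-1}|\theta^b_{M-1}\rangle,$$ where $\mathfrak g(k)=q^{4k}\dfrac{\mathsf b^b}{\mathsf c^b}\cdot\dfrac{\mathsf c^bq^{-2k}+r_0q\,\mathsf c^a\mathsf b^c}{\mathsf b^bq^{2k}+r_0q^{-1}\mathsf c^a\mathsf b^c}$ (the last term is absent for $M=0$).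
   Context: $q\in\mathbb C^*$ is not a root of unity, $s\in\{0,\tfrac12,1,\dots\}$, $\mathcal V$ a complex vector space of dimension $2s+1$ with identity $\mathbb I$; $[X,Y]_q=qXY-q^{-1}YX$. Labels range over $\{\cdot,*,\diamond\}$; $A^{\cdot}=A$, $\mathsf b^\cdot=\mathsf b$, $\mathsf c^\cdot=\mathsf c$. Fix nonzero $r_0,\mathsf b^a,\mathsf c^a$ with $r_0^{-2}=\mathsf b\mathsf c=\mathsf b^*\mathsf c^*=\mathsf b^\diamond\mathsf c^\diamond$; $\theta^a_M=\mathsf b^aq^{2M}+\mathsf c^aq^{-2M}$; for distinct $a,b,c$, $\omega^{\{a,b,c\}}=-(q-q^{-1})^2(\theta^a_s\theta^b_s-r_0^{-1}(q^{2s+1}+q^{-2s-1})\theta^c_s)$. For $A,A^*\in\mathrm{End}(\mathcal V)$ set $A^\diamond=\frac{r_0}{q^2-q^{-2}}[A^*,A]_q+\frac{r_0\omega^{\{\cdot,*,\diamond\}}}{(q-q^{-1})(q^2-q^{-2})}\mathbb I$. Hypothesis (AW): for every ordered pair $(a,b)$ of distinct labels, $c$ the remaining one, $[A^a,[A^a,A^b]_q]_{q^{-1}}=-\frac{(q^2-q^{-2})^2}{r_0^2}A^b+\omega^{\{a,b,c\}}A^a+\frac{q+q^{-1}}{r_0}\omega^{\{a,c,b\}}\mathbb I$. A Leonard pair on $\mathcal V$ is a pair of diagonalizable operators such that each has an eigenbasis in which the other is represented by an irreducible tridiagonal matrix. A cyclic triple is one of $(\cdot,*,\diamond),( *,\diamond,\cdot),(\diamond,\cdot,*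 )$. Coefficients: for a cyclic triple $(a,b,c)$, $A^{(b,a)}_{M,M-1}=q^{2-4s}\frac{(1-q^{2M})(\mathsf c^a-\mathsf b^aq^{2M+4s})(\mathsf b^b\mathsf b^cr_0q^{4s-1}+\mathsf b^aq^{2M-2})(\mathsf c^a\mathsf c^cr_0q^{-1}+\mathsf c^bq^{2M-2})}{(\mathsf c^a-\mathsf b^aq^{4M-2})(\mathsf c^a-\mathsf b^aq^{4M})}$, $A^{(b,a)}_{M-1,M}=\frac{(1-q^{2M-4s-2})(\mathsf c^a-\mathsf b^aq^{2M-2})(\mathsf c^a+\mathsf b^b\mathsf b^cr_0q^{2M+4s-1})(\mathsf c^b+\mathsf b^a\mathsf c^cr_0q^{2M-1})}{(\mathsf c^a-\mathsf b^aq^{4M-4})(\mathsf c^a-\mathsf b^aq^{4M-2})}$, $A^{(b,a)}_{M,M}=\theta^b_0-A^{(b,a)}_{M,M+1}-A^{(b,a)}_{M,M-1}$; coefficients with indices outside $\{0,\dots,2s\}$ are $0$. $A^{(a,b)}_{M,N}$ is the image of $A^{(b,a)}_{M,N}$ under $\mathsf b^a\leftrightarrow\mathsf b^b$, $\mathsf c^a\leftrightarrow\mathsf c^b$, $\mathsf b^c\mapsto q^{-4s}\mathsf c^c$, $\mathsf c^c\mapsto q^{4s}\mathsf b^c$. This defines $A^{(x,y)}$ for all six ordered pairs of distinct labels (in particular $A^{(c,b)}$ is obtained from the cyclic triple $(b,c,a)$). Bases attached to a Leonard pair: for cyclic $(a,b,c)$ with $(A^a,A^b)$ a Leonard pair (eigenvalue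 orderings $\theta^a_M,\theta^b_M$), there are bases $\{|\theta^a_M\rangle\}$, $\{|\theta^b_M\rangle\}$ with $A^a|\theta^a_M\rangle=\theta^a_M|\theta^a_M\rangle$, $A^b|\theta^a_M\rangle=A^{(b,a)}_{M+1,M}|\theta^a_{M+1}\rangle+A^{(b,a)}_{M,M}|\theta^a_M\rangle+A^{(b,a)}_{M-1,M}|\theta^a_{M-1}\rangle$, $A^b|\theta^b_M\rangle=\theta^b_M|\theta^b_M\rangle$, $A^a|\theta^b_M\rangle=A^{(a,b)}_{M+1,M}|\theta^b_{M+1}\rangle+A^{(a,b)}_{M,M}|\theta^b_M\rangle+A^{(a,b)}_{M-1,M}|\theta^b_{M-1}\rangle$; these are the bases ''attached to the pair $(A^a,A^b)$''. *)

From HB Require Import structures.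
From mathcomp Require Import all_boot all_order all_algebra.
From mathcomp Require Import reals.
From mathcomp Require Export complex.
Set Implicit Arguments. Unset Strict Implicit. Unset Printing Implicit Defensive.
Import Order.TTheory GRing.Theory Num.Theory.
Local Open Scope ring_scope.

Inductive label := Ldot | Lstar | Ldia.

Definition cyclic (a b c : label) : Prop :=
  [/\ a = Ldot, b = Lstar & c = Ldia] \/
  [/\ a = Lstar, b = Ldia & c = Ldot] \/
  [/\ a = Ldia, b = Ldot & c = Lstar].

Definition distinct3 (a b c : label) : Prop := [/\ a <> b, b <> c & a <> c].

Section Defs.
Variable F : fieldType.

Definition qcomm (n : nat) (q : F) (X Y : 'M[F]_n) : 'M[F]_n :=
  q *: (X *m Y) - q^-1 *: (Y *m X).

(* theta^l evaluated at exponent e : b q^e + c q^{-e};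
   theta^l_M = thetaE (2M), theta^l_s = thetaE (2s) = thetaE N where N = 2s *)
Definition thetaE (q bl cl : F) (e : int) : F := bl * q ^ e + cl * q ^ (- e).
Definition theta (q bl cl : F) (M : nat) : F := thetaE q bl cl (2 * M%:Z).

Definition omega (q r0 : F) (N : nat) (ba ca bb cb bc cc : F) : F :=
  - (q - q^-1) ^+ 2 *
   (thetaE q ba ca N%:Z * thetaE q bb cb N%:Z
    - r0^-1 * (q ^ (N%:Z + 1) + q ^ (- (N%:Z + 1))) * thetaE q bc cc N%:Z).

(* Coefficients A^{(b,a)} for a cyclic triple (a,b,c), N = 2s;
   arguments ordered (b^a, c^a, b^b, c^b, b^c, c^c). *)
(* lowc M = A^{(b,a)}_{M,M-1}  (0 unless 1 <= M <= N) *)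
Definition lowc (q r0 : F) (N : nat) (ba ca bb cb bc cc : F) (M : nat) : F :=
  if (1 <= M <= N)%N then
    let m := M%:Z in let n := N%:Z in
    q ^ (2 - 2 * n) * (1 - q ^ (2 * m)) * (ca - ba * q ^ (2 * m + 2 * n))
    * (bb * bc * r0 * q ^ (2 * n - 1) + ba * q ^ (2 * m - 2))
    * (ca * cc * r0 * q ^ (-1) + cb * q ^ (2 * m - 2))
    / ((ca - ba * q ^ (4 * m - 2)) * (ca - ba * q ^ (4 * m)))
  else 0.

(* upc M = A^{(b,a)}_{M-1,M}  (0 unless 1 <= M <= N) *)
Definition upc (q r0 : F) (N : nat) (ba ca bb cb bc cc : F) (M : nat) : F :=
  if (1 <= M <= N)%N then
    let m := M%:Z in let n := N%:Z in
    (1 - q ^ (2 * m - 2 * n - 2)) * (ca - ba * q ^ (2 * m - 2))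
    * (ca + bb * bc * r0 * q ^ (2 * m + 2 * n - 1))
    * (cb + ba * cc * r0 * q ^ (2 * m - 1))
    / ((ca - ba * q ^ (4 * m - 4)) * (ca - ba * q ^ (4 * m - 2)))
  else 0.

Definition diagc (q r0 : F) (N : nat) (ba ca bb cb bc cc : F) (M : nat) : F :=
  theta q bb cb 0 - upc q r0 N ba ca bb cb bc cc M.+1
  - lowc q r0 N ba ca bb cb bc cc M.

Definition tri_act (n : nat) (X P : 'M[F]_n) (M : 'I_n) (lo di up : F) : Prop :=
  X *m col M P =
  \sum_(i < n) (if (i == M.+1 :> nat) then lo
                else if (i == M :> nat) then di
                else if (i.+1 == M :> nat) then up else 0) *: col i P.

Definition irred_tridiag (n : nat) (T : 'M[F]_n) : Prop :=
  (forall i j : 'I_n, (i.+1 < j)%N \/ (j.+1 < i)%N -> T i j = 0) /\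
  (forall i j : 'I_n, (i.+1 == j :> nat) || (j.+1 == i :> nat) -> T i j != 0).

Definition leonard_pair (n : nat) (A B : 'M[F]_n) (thA thB : nat -> F) : Prop :=
  (exists P T : 'M[F]_n, [/\ P \in unitmx,
      A *m P = P *m diag_mx (\row_(i < n) thA i), B *m P = P *m T
      & irred_tridiag T]) /\
  (exists P T : 'M[F]_n, [/\ P \in unitmx,
      B *m P = P *m diag_mx (\row_(i < n) thB i), A *m P = P *m T
      & irred_tridiag T]).


Definition Aop (N : nat) (q r0 : F) (bp cp : label -> F) (A As : 'M[F]_N.+1)
    (l : label) : 'M[F]_N.+1 :=
  match l with
  | Ldot => A
  | Lstar => As
  | Ldia => (r0 / (q ^+ 2 - q^-2)) *: qcomm q As A
      + (r0 * omega q r0 N (bp Ldot) (cp Ldot) (bp Lstar) (cp Lstar) (bp Ldia) (cp Ldia)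
         / ((q - q^-1) * (q ^+ 2 - q^-2))) *: 1%:M
  end.
Arguments Aop : clear implicits.

Definition omegaL (N : nat) (q r0 : F) (bp cp : label -> F) (x y z : label) : F :=
  omega q r0 N (bp x) (cp x) (bp y) (cp y) (bp z) (cp z).

Definition AW (N : nat) (q r0 : F) (bp cp : label -> F) (A As : 'M[F]_N.+1) : Prop :=
  forall x y z : label, distinct3 x y z ->
    let Ax := Aop N q r0 bp cp A As x in
    let Ay := Aop N q r0 bp cp A As y in
    qcomm q^-1 Ax (qcomm q Ax Ay) =
      - ((q ^+ 2 - q^-2) ^+ 2 / r0 ^+ 2) *: Ay + omegaL N q r0 bp cp x y z *: Ax
      + ((q + q^-1) / r0 * omegaL N q r0 bp cp x z y) *: 1%:M.

Definition thetaL (q : F) (bp cp : label -> F) (l : label) (M : nat) : F :=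
  theta q (bp l) (cp l) M.

Definition attached (N : nat) (q r0 : F) (bp cp : label -> F) (A As : 'M[F]_N.+1)
    (a b c : label) (Pa Pb : 'M[F]_N.+1) : Prop :=
  let Aa := Aop N q r0 bp cp A As a in
  let Ab := Aop N q r0 bp cp A As b in
  let lo_ba := lowc q r0 N (bp a) (cp a) (bp b) (cp b) (bp c) (cp c) in
  let di_ba := diagc q r0 N (bp a) (cp a) (bp b) (cp b) (bp c) (cp c) in
  let up_ba := upc q r0 N (bp a) (cp a) (bp b) (cp b) (bp c) (cp c) in
  (* A^{(a,b)}: b^a <-> b^b, c^a <-> c^b, b^c |-> q^{-4s} c^c, c^c |-> q^{4s} b^c *)
  let bc' := q ^ (- (2 * N%:Z)) * cp c in
  let cc' := q ^ (2 * N%:Z) * bp c in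
  let lo_ab := lowc q r0 N (bp b) (cp b) (bp a) (cp a) bc' cc' in
  let di_ab := diagc q r0 N (bp b) (cp b) (bp a) (cp a) bc' cc' in
  let up_ab := upc q r0 N (bp b) (cp b) (bp a) (cp a) bc' cc' in
  [/\ Pa \in unitmx /\ Pb \in unitmx,
      forall M : 'I_N.+1, Aa *m col M Pa = thetaL q bp cp a M *: col M Pa,
      forall M : 'I_N.+1, tri_act Ab Pa M (lo_ba M.+1) (di_ba M) (up_ba M),
      forall M : 'I_N.+1, Ab *m col M Pb = thetaL q bp cp b M *: col M Pb
    & forall M : 'I_N.+1, tri_act Aa Pb M (lo_ab M.+1) (di_ab M) (up_ab M)].

Definition gfun (q r0 : F) (bp cp : label -> F) (a b c : label) (k : nat) : F :=
  q ^ (4 * k%:Z) * (bp b / cp b) *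
  ((cp b * q ^ (- (2 * k%:Z)) + r0 * q * cp a * bp c)
   / (bp b * q ^ (2 * k%:Z) + r0 * q^-1 * cp a * bp c)).

Arguments AW : clear implicits.
Arguments attached : clear implicits.

End Defs.
Arguments Aop {F}. Arguments AW {F}. Arguments attached {F}.

(* (AW) expresses A^c through the q-commutator [A^b, A^a]_q plus a scalar.  In the
   basis |theta^b_M> the operator A^b is diagonal and A^a is tridiagonal with the
   coefficients A^(a,b), so A^c is tridiagonal there too: its (M+-1, M) entries are
   those of A^a multiplied by q theta^b_(M+-1) - q^-1 theta^b_M.  Comparing with the
   closed forms of A^(c,b) is then an identity between rational functions of q^M and
   q^(2s), valid wherever their denominators do not vanish.  Those denominators are,
   up to nonzero factors, factors of off-diagonal coefficients A^(b,a) and A^(a,b),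
   and these are nonzero because the eigenspaces of a Leonard pair are lines and the
   associated tridiagonal matrices are irreducible. *)

From HB Require Import structures.
From mathcomp Require Import all_boot all_order all_algebra.
From mathcomp Require Import reals.
From mathcomp Require Import complex.
From mathcomp Require Import ring.
Set Implicit Arguments. Unset Strict Implicit. Unset Printing Implicit Defensive.
Import Order.TTheory GRing.Theory Num.Theory.
Local Open Scope ring_scope.

Section Columns.
Variables (F : fieldType) (n : nat).
Implicit Types (P Q : 'M[F]_n).

Lemma col_mulmx m p (A : 'M[F]_(m, n)) (B : 'M[F]_(n, p)) i :
  col i (A *m B) = A *m col i B.
Proof. by rewrite !colE mulmxA. Qed.

Lemma col_mulmx_diag P (d : 'I_n -> F) i :
  col i (P *m diag_mx (\row_j d j)) = d i *: col i P.
Proof. by rewrite mul_mx_diag; apply/matrixP => r s; rewrite !mxE mulrC. Qed.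

Lemma sum_scale_col P (c : 'I_n -> F) : \sum_i c i *: col i P = P *m \col_i c i.
Proof.
apply/matrixP => r s; rewrite !mxE summxE; apply: eq_bigr => i _.
by rewrite !mxE mulrC.
Qed.

Lemma unitmx_col_neq0 Q i : Q \in unitmx -> col i Q != 0.
Proof.
move=> hQ; apply/eqP => h.
have : invmx Q *m col i Q = delta_mx i 0 by rewrite colE mulKmx.
rewrite h mulmx0 => /matrixP /(_ i 0); rewrite !mxE !eqxx /=.
by move/eqP; rewrite eq_sym oner_eq0.
Qed.

Lemma unitmx_coord_inj Q (c d : 'I_n -> F) : Q \in unitmx ->
  \sum_i c i *: col i Q = \sum_i d i *: col i Q -> c =1 d.
Proof.
move=> hQ; rewrite !sum_scale_col => /(congr1 (mulmx (invmx Q))); rewrite !mulKmx //.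
by move/matrixP => h i; have := h i 0; rewrite !mxE.
Qed.

End Columns.

Section IrreducibleTridiagonal.
Variables (F : fieldType) (n : nat).

(* Row k of the eigenvector equation determines v_(k+1) from v_0, ..., v_k,
   because T_(k,k+1) is nonzero. *)
Lemma irred_tridiag_eigvec_eq0 (T : 'M[F]_n.+1) lam (v : 'cV[F]_n.+1) :
  irred_tridiag T -> T *m v = lam *: v -> v 0 0 = 0 -> v = 0.
Proof.
move=> [T0 Tnz] hv h0.
suff H k (i : 'I_n.+1) : (i <= k)%N -> v i 0 = 0.
  by apply/matrixP => i j; rewrite (ord1 j) mxE (H i).
elim: k i => [|k IH] i.
  by rewrite leqn0 => /eqP hi; rewrite (_ : i = 0) //; apply: val_inj.
rewrite leq_eqVlt => /orP [/eqP hi|]; last exact: IH.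
have hk : (k < n.+1)%N by have := ltn_ord i; rewrite hi; apply: ltnW.
pose j : 'I_n.+1 := Ordinal hk.
move/matrixP: hv => /(_ j 0); rewrite !mxE (IH j (leqnn _)) mulr0.
rewrite (bigD1 i) //= big1 ?addr0.
  move/eqP; rewrite mulf_eq0 => /orP [|/eqP //].
  by rewrite (negbTE (Tnz j i _)) // hi eqxx.
move=> l hl; case: (leqP l k) => hlk; first by rewrite IH // mulr0.
rewrite T0 ?mul0r //; left => /=.
by rewrite ltn_neqAle hlk andbT eq_sym -hi; move: hl; apply: contra => /eqP/val_inj ->.
Qed.

Lemma irred_tridiag_eigvec_colinear (X P T : 'M[F]_n.+1) lam (x y : 'cV[F]_n.+1) :
  P \in unitmx -> X *m P = P *m T -> irred_tridiag T ->
  X *m x = lam *: x -> X *m y = lam *: y -> y != 0 -> exists k, x = k *: y.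
Proof.
move=> hP hXP hT hx hy y0.
have hTP (z : 'cV[F]_n.+1) : X *m z = lam *: z -> T *m (invmx P *m z) = lam *: (invmx P *m z).
  move=> hz; have -> : T = invmx P *m X *m P by rewrite -mulmxA hXP mulKmx.
  by rewrite -!mulmxA mulKVmx // hz scalemxAr.
set xp := invmx P *m x; set yp := invmx P *m y.
have yp0 : yp 0 0 != 0.
  apply: contra y0 => /eqP h; have := irred_tridiag_eigvec_eq0 hT (hTP _ hy) h.
  by move/(congr1 (mulmx P)); rewrite mulKVmx // mulmx0 => ->.
exists (xp 0 0 / yp 0 0); set k := _ / _.
have hz : T *m (xp - k *: yp) = lam *: (xp - k *: yp).
  by rewrite mulmxBr -scalemxAr !hTP // scalerBr !scalerA mulrC.
have hz0 : (xp - k *: yp) 0 0 = 0.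
  have entry (u v : 'cV[F]_n.+1) : (u - k *: v) 0 0 = u 0 0 - k * v 0 0 by rewrite !mxE.
  by rewrite entry divfK // subrr.
move/eqP: (irred_tridiag_eigvec_eq0 hT hz hz0).
rewrite subr_eq0 /xp /yp scalemxAr => /eqP /(congr1 (mulmx P)).
by rewrite !mulKVmx.
Qed.

End IrreducibleTridiagonal.

Section TridiagonalAction.
Variable F : fieldType.

Lemma tri_act_ext n (X P : 'M[F]_n) (M : 'I_n) lo di up lo' di' up' :
  ((M.+1 < n)%N -> lo = lo') -> di = di' -> ((0 < M)%N -> up = up') ->
  tri_act X P M lo di up -> tri_act X P M lo' di' up'.
Proof.
move=> elo <- eup; rewrite /tri_act => ->; apply: eq_bigr => i _; congr (_ *: _).
case: ifP => [/eqP hi|_]; first by rewrite elo // -hi ltn_ord.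
case: ifP => // _; case: ifP => // /eqP hi.
by rewrite eup // -hi.
Qed.

Lemma tri_act_qcomm_eigen n (q k kap : F) (X Y P : 'M[F]_n) (th : nat -> F)
    (M : 'I_n) lo di up :
  (forall i : 'I_n, Y *m col i P = th i *: col i P) ->
  tri_act X P M lo di up ->
  tri_act (k *: qcomm q Y X + kap *: 1%:M) P M
    (k * (q * th M.+1 - q^-1 * th M) * lo)
    (k * (q - q^-1) * th M * di + kap)
    (k * (q * th M.-1 - q^-1 * th M) * up).
Proof.
rewrite /tri_act => hY hX.
rewrite mulmxDl -!scalemxAl mul1mx /qcomm mulmxBl -!scalemxAl -!mulmxA hX hY.
rewrite -scalemxAr hX mulmx_sumr.
under eq_bigr => i _ do rewrite -scalemxAr hY scalerA.
have -> : kap *: col M P = \sum_i (kap * (i == M)%:R) *: col i P.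
  rewrite (bigD1 M) //= eqxx mulr1 big1 ?addr0 // => i /negPf ->.
  by rewrite mulr0 scale0r.
rewrite !scaler_sumr -sumrB scaler_sumr -big_split /=.
apply: eq_bigr => i _; rewrite !scalerA -scalerBl scalerA -scalerDl.
congr (_ *: _); rewrite (_ : (i == M) = (i == M :> nat)) //.
case: ifP => [/eqP ->|_]; first by rewrite gtn_eqF // mulr0n; ring.
case: ifP => [/eqP ->|_]; first by rewrite mulr1n; ring.
case: ifP => [/eqP <-|_]; first by rewrite mulr0n; ring.
by rewrite mulr0n; ring.
Qed.

End TridiagonalAction.

Section LeonardCoefficients.
Variables (F : fieldType) (N : nat) (X Y P T P' T' Q : 'M[F]_N.+1) (th : nat -> F).
Hypotheses (hP : P \in unitmx) (hXP : X *m P = P *m diag_mx (\row_(i < N.+1) th i))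
  (hP' : P' \in unitmx) (hXP' : X *m P' = P' *m T') (hT' : irred_tridiag T')
  (hQ : Q \in unitmx) (hXQ : forall M : 'I_N.+1, X *m col M Q = th M *: col M Q).

Let coef (m : 'I_N.+1) := (invmx Q *m col m P) m 0.

(* The eigenspaces of X are lines, since X is irreducible tridiagonal in the basis P'. *)
Lemma eigenbasis_col_rescale (m : 'I_N.+1) : coef m != 0 /\ col m P = coef m *: col m Q.
Proof.
have hx : X *m col m P = th m *: col m P by rewrite -col_mulmx hXP col_mulmx_diag.
have [k hk] := irred_tridiag_eigvec_colinear hP' hXP' hT' hx (hXQ m) (unitmx_col_neq0 m hQ).
have -> : coef m = k by rewrite /coef hk -scalemxAr colE mulKmx // !mxE !eqxx mulr1.
by split=> //; apply: contraNneq (unitmx_col_neq0 m hP) => k0; rewrite hk k0 scale0r.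
Qed.

Lemma tri_act_coef_neq0 (lo di up : nat -> F) :
  Y *m P = P *m T -> irred_tridiag T ->
  (forall M : 'I_N.+1, tri_act Y Q M (lo M.+1) (di M) (up M)) ->
  forall i, (0 < i <= N)%N -> lo i != 0 /\ up i != 0.
Proof.
move=> hYP [_ Tnz] hYQ [//|i] /= hi.
have rel (m j : 'I_N.+1) : T j m * coef j = coef m *
    (if (j == m.+1 :> nat) then lo m.+1 else if (j == m :> nat) then di m
     else if (j.+1 == m :> nat) then up m else 0).
  move: j; apply: unitmx_coord_inj hQ _; transitivity (Y *m col m P).
    rewrite -col_mulmx hYP col_mulmx (_ : col m T = \col_j T j m); last first.
      by apply/colP => j; rewrite !mxE.
    rewrite -sum_scale_col; apply: eq_bigr => j _.
    by rewrite (eigenbasis_col_rescale j).2 scalerA.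
  rewrite (eigenbasis_col_rescale m).2 -scalemxAr hYQ scaler_sumr.
  by apply: eq_bigr => j _; rewrite scalerA.
pose m : 'I_N.+1 := Ordinal (ltnW hi : i < N.+1)%N.
pose j : 'I_N.+1 := Ordinal (hi : i.+1 < N.+1)%N.
have [cm _] := eigenbasis_col_rescale m; have [cj _] := eigenbasis_col_rescale j.
split.
- have := rel m j; rewrite /= eqxx; apply: contraPneq => ->.
  by rewrite mulr0; apply/eqP; rewrite mulf_neq0 // Tnz //= eqxx orbT.
- have := rel j m; rewrite /= eqxx (ltn_eqF (ltnSn i)) (ltn_eqF (leqW (ltnSn i))).
  apply: contraPneq => ->.
  by rewrite mulr0; apply/eqP; rewrite mulf_neq0 // Tnz //= eqxx.
Qed.
End LeonardCoefficients.

Section QCommutator.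
Variables (F : fieldType) (n : nat) (q : F).
Hypothesis hq : q != 0.
Implicit Types X Y C : 'M[F]_n.

Lemma qcommC X Y : qcomm q X Y = - qcomm q^-1 Y X.
Proof. by rewrite /qcomm invrK opprB. Qed.

Lemma qcomm_nestedC X Y : qcomm q X (qcomm q Y X) = - qcomm q^-1 X (qcomm q X Y).
Proof.
rewrite /qcomm invrK !mulmxBr !mulmxBl -!scalemxAl -!scalemxAr !mulmxA.
by apply/matrixP => i j; rewrite !mxE; field.
Qed.

Lemma qcomm_affinel (k m : F) C Y :
  qcomm q (k *: C + m *: 1%:M) Y = k *: qcomm q C Y + (m * (q - q^-1)) *: Y.
Proof.
rewrite /qcomm !mulmxDl !mulmxDr -!scalemxAl -!scalemxAr mul1mx mulmx1.
by apply/matrixP => i j; rewrite !mxE; ring.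
Qed.

Lemma qcomm_affiner (k m : F) C X :
  qcomm q X (k *: C + m *: 1%:M) = k *: qcomm q X C + (m * (q - q^-1)) *: X.
Proof.
rewrite /qcomm !mulmxDl !mulmxDr -!scalemxAl -!scalemxAr mul1mx mulmx1.
by apply/matrixP => i j; rewrite !mxE; ring.
Qed.

End QCommutator.

Lemma omegaC (F : fieldType) (q r0 : F) N ba ca bb cb bc cc :
  omega q r0 N ba ca bb cb bc cc = omega q r0 N bb cb ba ca bc cc.
Proof. by rewrite /omega [thetaE q ba ca _ * _]mulrC. Qed.

(* For c = diamond this is the definition of A^diamond; in the two other cases it
   is (AW) with y = c, solved for A^c. *)
Lemma Aop_cyclic (F : fieldType) N (q r0 : F) bp cp (A As : 'M[F]_N.+1) a b c :
  q != 0 -> q ^+ 2 - 1 != 0 -> q ^+ 4 - 1 != 0 -> r0 != 0 ->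
  AW N q r0 bp cp A As -> cyclic a b c ->
  Aop N q r0 bp cp A As c =
   (r0 / (q ^+ 2 - q^-2)) *: qcomm q (Aop N q r0 bp cp A As b) (Aop N q r0 bp cp A As a)
   + (r0 * omegaL N q r0 bp cp a b c / ((q - q^-1) * (q ^+ 2 - q^-2))) *: 1%:M.
Proof.
move=> hq hq2 hq4 hr HAW [[-> -> ->]|[[-> -> ->]|[-> -> ->]]] //=.
- have /= AWsd := HAW Lstar Ldot Ldia (ltac:(by split)).
  rewrite qcomm_affinel [qcomm q (qcomm _ _ _) _]qcommC AWsd.
  rewrite /omegaL omegaC; apply/matrixP => i j; rewrite !mxE.
  by field; rewrite -!expr2 -exprM hq hq2 hq4 hr.
- have /= AWds := HAW Ldot Lstar Ldia (ltac:(by split)).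
  rewrite qcomm_affiner qcomm_nestedC // AWds.
  rewrite /omegaL [omega _ _ _ (bp Ldia) _ _ _ _ _]omegaC.
  apply/matrixP => i j; rewrite !mxE.
  by field; rewrite -!expr2 -exprM hq hq2 hq4 hr.
Qed.

Section LaurentForms.
Variables (F : fieldType) (q r0 : F).
Hypothesis hq : q != 0.

Lemma expfz_lin (M N : nat) (i j k e : int) : e = i * M%:Z + j * N%:Z + k ->
  q ^ e = (q ^+ M) ^ i * (q ^+ N) ^ j * q ^ k.
Proof.
move->; rewrite !expfzDr ?expfz_neq0 //.
by rewrite !exprnP !exprz_exp [M%:Z * _]mulrC [N%:Z * _]mulrC.
Qed.

(* Rewrites [q ^ e] with [e = i * M + j * N + k] into a Laurent monomial in
   [q ^+ M] and [q ^+ N]. *)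
Local Tactic Notation "expfz_lin" uconstr(M) uconstr(N) uconstr(i) uconstr(j) uconstr(k) :=
  rewrite (@expfz_lin M N i j k); [rewrite /exprz /=; field;
    repeat (apply/andP; split); by rewrite ?expf_neq0 ?oner_eq0 | ring].

(* The coefficients as rational functions of X = q^M and Y = q^N (N = 2s). *)
Definition lowc_rat (ba ca bb cb bc cc X Y : F) :=
  q^+2 / Y^+2 * (1 - X^+2) * (ca - ba * (X^+2 * Y^+2))
  * (bb * bc * r0 * (Y^+2 / q) + ba * (X^+2 / q^+2)) * (ca * cc * r0 * q^-1 + cb * (X^+2 / q^+2))
  / ((ca - ba * (X^+4 / q^+2)) * (ca - ba * X^+4)).

Definition upc_rat (ba ca bb cb bc cc X Y : F) :=
  (1 - X^+2 / (Y^+2 * q^+2)) * (ca - ba * (X^+2 / q^+2)) * (ca + bb * bc * r0 * (X^+2 * Y^+2 / q))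
  * (cb + ba * cc * r0 * (X^+2 / q)) / ((ca - ba * (X^+4 / q^+4)) * (ca - ba * (X^+4 / q^+2))).

Definition theta_rat (b c X : F) := b * X^+2 + c / X^+2.

Definition omega_rat (ba ca bb cb bc cc Y : F) :=
  - (q - q^-1) ^+ 2 * ((ba * Y + ca / Y) * (bb * Y + cb / Y)
    - r0^-1 * (Y * q + (Y * q)^-1) * (bc * Y + cc / Y)).

Definition gfun_rat (ca bb cb bc X : F) :=
  X^+4 * (bb / cb) * ((cb / X^+2 + r0 * q * ca * bc) / (bb * X^+2 + r0 * q^-1 * ca * bc)).

Lemma lowc_ratE N ba ca bb cb bc cc M : (1 <= M <= N)%N ->
  lowc q r0 N ba ca bb cb bc cc M = lowc_rat ba ca bb cb bc cc (q ^+ M) (q ^+ N).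
Proof.
move=> hM; rewrite /lowc hM /lowc_rat.
have -> : q ^ (2 - 2 * N%:Z) = q^+2 / (q^+N)^+2 by expfz_lin M N 0 (-2) 2.
have -> : q ^ (2 * M%:Z) = (q^+M)^+2 by expfz_lin M N 2 0 0.
have -> : q ^ (2 * M%:Z + 2 * N%:Z) = (q^+M)^+2 * (q^+N)^+2 by expfz_lin M N 2 2 0.
have -> : q ^ (2 * N%:Z - 1) = (q^+N)^+2 / q by expfz_lin M N 0 2 (-1).
have -> : q ^ (2 * M%:Z - 2) = (q^+M)^+2 / q^+2 by expfz_lin M N 2 0 (-2).
have -> : q ^ (4 * M%:Z - 2) = (q^+M)^+4 / q^+2 by expfz_lin M N 4 0 (-2).
by have -> : q ^ (4 * M%:Z) = (q^+M)^+4 by expfz_lin M N 4 0 0.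
Qed.

Lemma upc_ratE N ba ca bb cb bc cc M : (1 <= M <= N)%N ->
  upc q r0 N ba ca bb cb bc cc M = upc_rat ba ca bb cb bc cc (q ^+ M) (q ^+ N).
Proof.
move=> hM; rewrite /upc hM /upc_rat.
have -> : q ^ (2 * M%:Z - 2 * N%:Z - 2) = (q^+M)^+2 / ((q^+N)^+2 * q^+2)
  by expfz_lin M N 2 (-2) (-2).
have -> : q ^ (2 * M%:Z - 2) = (q^+M)^+2 / q^+2 by expfz_lin M N 2 0 (-2).
have -> : q ^ (2 * M%:Z + 2 * N%:Z - 1) = (q^+M)^+2 * (q^+N)^+2 / q
  by expfz_lin M N 2 2 (-1).
have -> : q ^ (2 * M%:Z - 1) = (q^+M)^+2 / q by expfz_lin M N 2 0 (-1).
have -> : q ^ (4 * M%:Z - 4) = (q^+M)^+4 / q^+4 by expfz_lin M N 4 0 (-4).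
by have -> : q ^ (4 * M%:Z - 2) = (q^+M)^+4 / q^+2 by expfz_lin M N 4 0 (-2).
Qed.

Lemma theta_ratE b c M : theta q b c M = theta_rat b c (q ^+ M).
Proof.
rewrite /theta /thetaE /theta_rat.
have -> : q ^ (2 * M%:Z) = (q^+M)^+2 by expfz_lin M 0 2 0 0.
by have -> : q ^ (- (2 * M%:Z)) = ((q^+M)^+2)^-1 by expfz_lin M 0 (-2) 0 0.
Qed.

Lemma theta0 b c : theta q b c 0 = b + c.
Proof. by rewrite /theta /thetaE mulr0 oppr0 expr0z !mulr1. Qed.

Lemma omega_ratE N ba ca bb cb bc cc :
  omega q r0 N ba ca bb cb bc cc = omega_rat ba ca bb cb bc cc (q ^+ N).
Proof.
rewrite /omega /thetaE /omega_rat -exprnP.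
have -> : q ^ (- N%:Z) = (q^+N)^-1 by expfz_lin 0 N 0 (-1) 0.
have -> : q ^ (N%:Z + 1) = q^+N * q by expfz_lin 0 N 0 1 1.
by have -> : q ^ (- (N%:Z + 1)) = (q^+N * q)^-1 by expfz_lin 0 N 0 (-1) (-1).
Qed.

Lemma gfun_ratE bp cp a b c M :
  gfun q r0 bp cp a b c M = gfun_rat (cp a) (bp b) (cp b) (bp c) (q ^+ M).
Proof.
rewrite /gfun /gfun_rat.
have -> : q ^ (4 * M%:Z) = (q^+M)^+4 by expfz_lin M 0 4 0 0.
have -> : q ^ (2 * M%:Z) = (q^+M)^+2 by expfz_lin M 0 2 0 0.
by have -> : q ^ (- (2 * M%:Z)) = ((q^+M)^+2)^-1 by expfz_lin M 0 (-2) 0 0.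
Qed.

Lemma expfz_2N N : q ^ (2 * N%:Z) = (q ^+ N) ^+ 2.
Proof. by expfz_lin 0 N 0 2 0. Qed.

Lemma expfz_m2N N : q ^ (- (2 * N%:Z)) = ((q ^+ N) ^+ 2)^-1.
Proof. by expfz_lin 0 N 0 (-2) 0. Qed.

End LaurentForms.

Lemma neq0_of_mul_eq (F : fieldType) (x u y : F) : x = u * y -> x != 0 -> y != 0.
Proof. by move->; rewrite mulf_eq0 negb_or => /andP[]. Qed.

Section CoefficientIdentities.
Variables (F : fieldType) (q r0 : F) (N : nat) (bp cp : label -> F) (a b c : label).
Hypotheses (hq : q != 0) (hq2 : q ^+ 2 - 1 != 0) (hq4 : q ^+ 4 - 1 != 0) (hr : r0 != 0)
  (hbn : forall l, bp l != 0) (hbc : forall l, r0 ^- 2 = bp l * cp l).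

Local Notation lo_ba := (lowc q r0 N (bp a) (cp a) (bp b) (cp b) (bp c) (cp c)).
Local Notation up_ba := (upc q r0 N (bp a) (cp a) (bp b) (cp b) (bp c) (cp c)).
Local Notation bc' := (q ^ (- (2 * N%:Z)) * cp c).
Local Notation cc' := (q ^ (2 * N%:Z) * bp c).
Local Notation lo_ab := (lowc q r0 N (bp b) (cp b) (bp a) (cp a) bc' cc').
Local Notation di_ab := (diagc q r0 N (bp b) (cp b) (bp a) (cp a) bc' cc').
Local Notation up_ab := (upc q r0 N (bp b) (cp b) (bp a) (cp a) bc' cc').
Local Notation lo_cb := (lowc q r0 N (bp b) (cp b) (bp c) (cp c) (bp a) (cp a)).
Local Notation di_cb := (diagc q r0 N (bp b) (cp b) (bp c) (cp c) (bp a) (cp a)).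
Local Notation up_cb := (upc q r0 N (bp b) (cp b) (bp c) (cp c) (bp a) (cp a)).
Local Notation th := (thetaL q bp cp b).
Local Notation k0 := (r0 / (q ^+ 2 - q^-2)).
Local Notation kap := (r0 * omegaL N q r0 bp cp a b c / ((q - q^-1) * (q ^+ 2 - q^-2))).

Lemma cpE l : cp l = r0 ^- 2 / bp l.
Proof. by rewrite (hbc l) [bp l * _]mulrC mulfK. Qed.

Lemma lowc_rat_neq0 ba ca bb cb bc cc X Y : lowc_rat q r0 ba ca bb cb bc cc X Y != 0 ->
  [/\ ca - ba * (X^+4 / q^+2) != 0, ca - ba * X^+4 != 0
    & bb * bc * r0 * (Y^+2 / q) + ba * (X^+2 / q^+2) != 0].
Proof.
by move=> h; split; apply: contra h => /eqP e; rewrite /lowc_rat e ?(mul0r, mulr0, invr0).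
Qed.

Lemma upc_rat_neq0 ba ca bb cb bc cc X Y : upc_rat q r0 ba ca bb cb bc cc X Y != 0 ->
  [/\ ca - ba * (X^+4 / q^+4) != 0, ca - ba * (X^+4 / q^+2) != 0
    & cb + ba * cc * r0 * (X^+2 / q) != 0].
Proof.
by move=> h; split; apply: contra h => /eqP e; rewrite /upc_rat e ?(mul0r, mulr0, invr0).
Qed.

(* Closes each side condition [E != 0] left by [field] with a hypothesis [E' != 0]
   such that [E = E'] is a ring identity. *)
Local Ltac neq0_by_hyp := repeat (apply/andP; split); try (by rewrite ?oner_eq0);
  match goal with h : is_true (?E' != 0) |- is_true (?E != 0) =>
     (have -> : E = E' by ring); exact h end.

Lemma lowc_cb_identity M : (M < N)%N -> lo_ab M.+1 != 0 -> up_ba M.+1 != 0 ->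
  k0 * (q * th M.+1 - q^-1 * th M) * lo_ab M.+1 = lo_cb M.+1 * gfun q r0 bp cp a b c M.
Proof.
move=> hMN hL hU; have hM1 : (1 <= M.+1 <= N)%N by [].
rewrite /thetaL !lowc_ratE // !theta_ratE // gfun_ratE // expfz_2N // expfz_m2N //.
rewrite lowc_ratE // expfz_2N // expfz_m2N // in hL; rewrite upc_ratE // in hU.
case/lowc_rat_neq0: hL => d1 d2 _; case/upc_rat_neq0: hU => _ _ d3.
move: d1 d2 d3; rewrite [q ^+ M.+1]exprS.
have hX : q ^+ M != 0 by rewrite expf_neq0.
have hY : q ^+ N != 0 by rewrite expf_neq0.
move: (q ^+ M) (q ^+ N) hX hY => X Y hX hY.
rewrite !cpE; move: (hbn a) (hbn b) (hbn c).
move: (bp a) (bp b) (bp c) => ba bb bc ha hb hc d1 d2 d3.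
have c1 : 1 - r0^+2 * bb^+2 * (q^+2 * X^+4) != 0.
  by apply: (neq0_of_mul_eq (u := r0^-2/bb) _ d1); field; neq0_by_hyp.
have c2 : 1 - r0^+2 * bb^+2 * (q^+4 * X^+4) != 0.
  by apply: (neq0_of_mul_eq (u := r0^-2/bb) _ d2); field; neq0_by_hyp.
have c3 : r0 * ba * bb * q * X^+2 + bc != 0.
  by apply: (neq0_of_mul_eq (u := r0^-2/(bb * bc)) _ d3); field; neq0_by_hyp.
by rewrite /lowc_rat /theta_rat /gfun_rat; field; neq0_by_hyp.
Qed.

(* The last hypothesis is needed because the numerator of g(M-1) is, up to a
   nonzero factor, a factor of A^(b,a)_(N-M+1, N-M). *)
Lemma upc_cb_identity M : (0 < M <= N)%N ->
  up_ab M != 0 -> up_ba M != 0 -> lo_ba (N - M.-1) != 0 ->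
  k0 * (q * th M.-1 - q^-1 * th M) * up_ab M = up_cb M / gfun q r0 bp cp a b c M.-1.
Proof.
case: M => [//|i] /= hiN hU hV hL.
have hM1 : (1 <= i.+1 <= N)%N by [].
have hM2 : (1 <= N - i <= N)%N by rewrite subn_gt0 hiN leq_subr.
rewrite /thetaL !upc_ratE // !theta_ratE // gfun_ratE // expfz_2N // expfz_m2N //.
rewrite upc_ratE // expfz_2N // expfz_m2N // in hU.
rewrite upc_ratE // in hV; rewrite lowc_ratE // in hL.
case/upc_rat_neq0: hU => d1 d2 _; case/upc_rat_neq0: hV => _ _ d3.
case/lowc_rat_neq0: hL => _ _ d4.
have eY : q ^+ N = q ^+ (N - i) * q ^+ i by rewrite -exprD subnK // ltnW.
move: d4; rewrite [in X in X -> _]eY => d4.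
move: d1 d2 d3 d4; rewrite [q ^+ i.+1]exprS.
have hX : q ^+ i != 0 by rewrite expf_neq0.
have hY : q ^+ N != 0 by rewrite expf_neq0.
have hZ : q ^+ (N - i) != 0 by rewrite expf_neq0.
move: (q ^+ i) (q ^+ N) (q ^+ (N - i)) hX hY hZ => X Y Z hX hY hZ.
rewrite !cpE; move: (hbn a) (hbn b) (hbn c).
move: (bp a) (bp b) (bp c) => ba bb bc ha hb hc d1 d2 d3 d4.
have c1 : 1 - r0^+2 * bb^+2 * X^+4 != 0.
  by apply: (neq0_of_mul_eq (u := r0^-2/bb) _ d1); field; neq0_by_hyp.
have c2 : 1 - r0^+2 * bb^+2 * (q^+2 * X^+4) != 0.
  by apply: (neq0_of_mul_eq (u := r0^-2/bb) _ d2); field; neq0_by_hyp.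
have c3 : r0 * ba * bb * q * X^+2 + bc != 0.
  by apply: (neq0_of_mul_eq (u := r0^-2/(bb * bc)) _ d3); field; neq0_by_hyp.
have c4 : ba + r0 * q * bb * bc * X^+2 != 0.
  by apply: (neq0_of_mul_eq (u := Z^+2/q^+2) _ d4); field; neq0_by_hyp.
by rewrite /upc_rat /theta_rat /gfun_rat; field; neq0_by_hyp.
Qed.

Local Notation diag_identity M := (k0 * (q - q^-1) * th M * di_ab M + kap = di_cb M).

Local Ltac diag_to_rat :=
  rewrite /diagc !theta0 /thetaL /omegaL omega_ratE // !theta_ratE // expfz_2N // expfz_m2N //.

Lemma diagc_cb_identity_single : N = 0%N -> diag_identity 0%N.
Proof.
move=> N0; diag_to_rat; rewrite N0 /lowc /upc /= expr0 !cpE.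
move: (hbn a) (hbn b) (hbn c); move: (bp a) (bp b) (bp c) => ba bb bc ha hb hc.
by rewrite /theta_rat /omega_rat; field; neq0_by_hyp.
Qed.

Lemma diagc_cb_identity_first : (0 < N)%N -> up_ab 1 != 0 -> diag_identity 0%N.
Proof.
move=> N0 hU; diag_to_rat; have hM1 : (1 <= 1 <= N)%N by rewrite N0.
move: hU; rewrite !upc_ratE // expfz_2N // expfz_m2N // => /upc_rat_neq0[d1 d2 _].
move: d1 d2; rewrite /lowc /= !expr1 expr0.
have hY : q ^+ N != 0 by rewrite expf_neq0.
move: (q ^+ N) hY => Y hY; rewrite !cpE.
move: (hbn a) (hbn b) (hbn c); move: (bp a) (bp b) (bp c) => ba bb bc ha hb hc d1 d2.
have c1 : 1 - r0^+2 * bb^+2 != 0.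
  by apply: (neq0_of_mul_eq (u := r0^-2/bb) _ d1); field; neq0_by_hyp.
have c2 : 1 - r0^+2 * bb^+2 * q^+2 != 0.
  by apply: (neq0_of_mul_eq (u := r0^-2/bb) _ d2); field; neq0_by_hyp.
by rewrite /upc_rat /theta_rat /omega_rat; field; neq0_by_hyp.
Qed.

Lemma diagc_cb_identity_inner M : (0 < M < N)%N ->
  up_ab M.+1 != 0 -> lo_ab M != 0 -> diag_identity M.
Proof.
case/andP=> M0 MN hU hL; diag_to_rat.
have hM1 : (1 <= M.+1 <= N)%N by [].
have hM2 : (1 <= M <= N)%N by rewrite M0 ltnW.
move: hU; rewrite !upc_ratE // expfz_2N // expfz_m2N // => /upc_rat_neq0[d1 d2 _].
move: hL; rewrite !lowc_ratE // expfz_2N // expfz_m2N // => /lowc_rat_neq0[e1 e2 _].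
move: d1 d2 e1 e2; rewrite [q ^+ M.+1]exprS.
have hX : q ^+ M != 0 by rewrite expf_neq0.
have hY : q ^+ N != 0 by rewrite expf_neq0.
move: (q ^+ M) (q ^+ N) hX hY => X Y hX hY; rewrite !cpE.
move: (hbn a) (hbn b) (hbn c); move: (bp a) (bp b) (bp c) => ba bb bc ha hb hc d1 d2 e1 e2.
have c1 : 1 - r0^+2 * bb^+2 * X^+4 != 0.
  by apply: (neq0_of_mul_eq (u := r0^-2/bb) _ d1); field; neq0_by_hyp.
have c2 : 1 - r0^+2 * bb^+2 * (q^+2 * X^+4) != 0.
  by apply: (neq0_of_mul_eq (u := r0^-2/bb) _ d2); field; neq0_by_hyp.
have c3 : q^+2 - r0^+2 * bb^+2 * X^+4 != 0.
  by apply: (neq0_of_mul_eq (u := r0^-2/(bb * q^+2)) _ e1); field; neq0_by_hyp.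
by rewrite /upc_rat /lowc_rat /theta_rat /omega_rat; field; neq0_by_hyp.
Qed.

Lemma diagc_cb_identity_last : (0 < N)%N -> lo_ab N != 0 -> diag_identity N.
Proof.
move=> N0 hL; diag_to_rat; have hM2 : (1 <= N <= N)%N by rewrite N0 leqnn.
move: hL; rewrite !lowc_ratE // expfz_2N // expfz_m2N // => /lowc_rat_neq0[e1 e2 _].
move: e1 e2; rewrite /upc ltnn andbF.
have hY : q ^+ N != 0 by rewrite expf_neq0.
move: (q ^+ N) hY => Y hY; rewrite !cpE.
move: (hbn a) (hbn b) (hbn c); move: (bp a) (bp b) (bp c) => ba bb bc ha hb hc e1 e2.
have c2 : 1 - r0^+2 * bb^+2 * Y^+4 != 0.
  by apply: (neq0_of_mul_eq (u := r0^-2/bb) _ e2); field; neq0_by_hyp.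
have c3 : q^+2 - r0^+2 * bb^+2 * Y^+4 != 0.
  by apply: (neq0_of_mul_eq (u := r0^-2/(bb * q^+2)) _ e1); field; neq0_by_hyp.
by rewrite /lowc_rat /theta_rat /omega_rat; field; neq0_by_hyp.
Qed.

Lemma diagc_cb_identity M : (M <= N)%N ->
  ((M < N)%N -> up_ab M.+1 != 0) -> ((0 < M)%N -> lo_ab M != 0) -> diag_identity M.
Proof.
move=> hMN hU hL; case: (posnP M) => [M0|M0].
  subst M; case: (posnP N) => [N0|N0]; first exact: diagc_cb_identity_single.
  exact: diagc_cb_identity_first N0 (hU N0).
case: (ltnP M N) => [MN|NM].
  by apply: diagc_cb_identity_inner; rewrite ?M0 ?hU ?hL.
have eMN : M = N by apply/eqP; rewrite eqn_leq hMN.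
by rewrite eMN in M0 hL *; apply: diagc_cb_identity_last M0 (hL M0).
Qed.

End CoefficientIdentities.

Theorem lemma3p4 (R : realType) (N : nat) (q r0 : R[i]) (bp cp : label -> R[i])
    (A As : 'M[R[i]]_N.+1) (a b c : label) (Pa Pb : 'M[R[i]]_N.+1) :
  q != 0 ->
  (forall k : nat, (0 < k)%N -> q ^+ k != 1) ->
  r0 != 0 ->
  (forall l, bp l != 0) -> (forall l, cp l != 0) ->
  (forall l, r0 ^- 2 = bp l * cp l) ->
  AW N q r0 bp cp A As ->
  cyclic a b c ->
  leonard_pair (Aop N q r0 bp cp A As a) (Aop N q r0 bp cp A As b)
               (thetaL q bp cp a) (thetaL q bp cp b) ->
  leonard_pair (Aop N q r0 bp cp A As b) (Aop N q r0 bp cp A As c)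
               (thetaL q bp cp b) (thetaL q bp cp c) ->
  attached N q r0 bp cp A As a b c Pa Pb ->
  forall M : 'I_N.+1,
    tri_act (Aop N q r0 bp cp A As c) Pb M
      (lowc q r0 N (bp b) (cp b) (bp c) (cp c) (bp a) (cp a) M.+1
         * gfun q r0 bp cp a b c M)
      (diagc q r0 N (bp b) (cp b) (bp c) (cp c) (bp a) (cp a) M)
      (upc q r0 N (bp b) (cp b) (bp c) (cp c) (bp a) (cp a) M
         / gfun q r0 bp cp a b c M.-1).
Proof.
move=> hq hq1 hr hbn _ hbc HAW hcyc [[P1 [T1 [hP1 hAP1 hBP1 hT1]]]].
move=> [P2 [T2 [hP2 hBP2 hAP2 hT2]]] _ [[hPa hPb] hAa hAbt hAb hAat] M.
have hq2 : q ^+ 2 - 1 != 0 by rewrite subr_eq0 hq1.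
have hq4 : q ^+ 4 - 1 != 0 by rewrite subr_eq0 hq1.
have nz_ba := tri_act_coef_neq0 hP1 hAP1 hP2 hAP2 hT2 hPa hAa hBP1 hT1 hAbt.
have nz_ab := tri_act_coef_neq0 hP2 hBP2 hP1 hBP1 hT1 hPb hAb hAP2 hT2 hAat.
have hMN : (M <= N)%N by rewrite -ltnS.
rewrite (Aop_cyclic hq hq2 hq4 hr HAW hcyc).
apply: tri_act_ext (tri_act_qcomm_eigen _ _ _ hAb (hAat M)).
- move=> hM; apply: lowc_cb_identity => //.
    exact: (nz_ab M.+1 hM).1.
  exact: (nz_ba M.+1 hM).2.
- apply: diagc_cb_identity => // hM; first exact: (nz_ab M.+1 hM).2.
  by case: (nz_ab M); rewrite ?hM.
move=> hM; have hM' : (0 < M <= N)%N by rewrite hM.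
have hNM : (0 < N - M.-1 <= N)%N.
  by rewrite subn_gt0 leq_subr (leq_trans _ hMN) // ltn_predL.
apply: upc_cb_identity => //.
- exact: (nz_ab M hM').2.
- exact: (nz_ba M hM').2.
- exact: (nz_ba _ hNM).1.
Qed.
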